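(* Let $m\in\mathbb{N}$, let $\|\cdot\|$ be an arbitrary norm on $\mathbb{R}^m$, and let $\varepsilon>0$. Set $n(m):=\lceil \log_2(m+1)\rceil+1$. Then there exists an algorithm $R_m^\varepsilon\colon\mathbb{R}^m\to\mathbb{R}^m$ that uses at most $n(m)$ adaptively chosen measurements, each of which is a Lipschitz-continuous functional $\mathbb{R}^m\to\mathbb{R}$ (with Lipschitz constant $1$ with respect to $\|\cdot\|$), such that \[ \|x-R_m^\varepsilon(x)\|\le\varepsilon\qquad\text{for all }x\in\mathbb{R}^m. \]
   Context: An algorithm using at most $n$ adaptive measurements on $\mathbb{R}^m$ is a map of the form $x\mapsto \Phi(y_1,\dots,y_n)$, where $y_1=\lambda_1(x)$ for a fixed functional $\lambda_1\colon\mathbb{R}^m\to\mathbb{R}$, and for $k\ge 2$, $y_k=\lambda_k^{(y_1,\dots,y_{k-1})}(x)$, where the functional $\lambda_k^{(y_1,\dots,y_{k-1})}\colon\mathbb{R}^m\to\mathbb{R}$ may depend in an arbitrary way on the previously computed values $y_1,\dots,y_{k-1}$; the reconstruction map $\Phi\colon\mathbb{R}^n\to\mathbb{R}^m$ is arbitrary (not necessarily continuous). Here every functional that may ever be used is required to be Lipschitz continuous. *)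

From mathcomp Require Import all_boot all_order all_algebra.
From mathcomp Require Import reals.
Set Implicit Arguments. Unset Strict Implicit. Unset Printing Implicit Defensive.
Import Order.TTheory GRing.Theory Num.Theory.
Local Open Scope ring_scope.

Definition is_norm (R : realType) (m : nat) (N : 'rV[R]_m -> R) : Prop :=
  [/\ forall x, 0 <= N x,
      forall x, N x = 0 -> x = 0,
      forall (a : R) x, N (a *: x) = `|a| * N x
    & forall x y, N (x + y) <= N x + N y].

(* An adaptive algorithm: the k-th functional (k = 0,1,...) is selected by
   the sequence of previously computed values [y_1; ...; y_k]; the
   reconstruction map Phi : seq R -> R^m is arbitrary. *)
Record adaptive_alg (R : realType) (m : nat) := AdaptiveAlg {
  alg_lam : seq R -> 'rV[R]_m -> R;
  alg_Phi : seq R -> 'rV[R]_m }.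

Fixpoint measurements (R : realType) (m : nat) (A : adaptive_alg R m)
    (k : nat) (x : 'rV[R]_m) : seq R :=
  match k with
  | 0 => [::]
  | k'.+1 => let ys := measurements A k' x in rcons ys (alg_lam A ys x)
  end.

Definition run_alg (R : realType) (m : nat) (A : adaptive_alg R m)
    (k : nat) (x : 'rV[R]_m) : 'rV[R]_m :=
  alg_Phi A (measurements A k x).

Definition lipschitz1_measurements (R : realType) (m : nat)
    (N : 'rV[R]_m -> R) (A : adaptive_alg R m) (k : nat) : Prop :=
  forall (ys : seq R), (size ys < k)%N ->
    forall x y : 'rV[R]_m, `|alg_lam A ys x - alg_lam A ys y| <= N (x - y).

Definition n_meas (m : nat) : nat := (up_log 2 m.+1).+1.

(* By equivalence of norms it suffices to reconstruct within max-norm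
   accuracy s, and to make the measurements Lipschitz for the max-norm.
   Consider the m + 1 grids s (Z^m + j/(m+1) (1,...,1)), j <= m.  A point x is well inside a
   cell of grid j when every shifted coordinate is at distance >= 1/(2(m+1))
   from Z; since two shifts differ by at least 1/(m+1) modulo Z, each
   coordinate spoils at most one grid, so some grid is good for x.  The
   Lipschitz function [grid_defect j] vanishes exactly on the good points of
   grid j.  A binary search with ceil(log2(m+1)) Lipschitz measurements
   (minima of [grid_defect] over residue classes of j modulo powers of 2)
   identifies a good grid j, and one last measurement returns an injective
   code of the cell of x in grid j, cut off continuously by [grid_defect j].
   Points with the same measurements lie in the same cell, so any point of
   the fiber is a reconstruction within accuracy eps. *)
From mathcomp Require Import all_boot all_order all_algebra.
From mathcomp Require Import reals.
From mathcomp Require Import all_classical all_reals all_analysis.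
From mathcomp Require Import zify ring lra.
From Stdlib Require Import ClassicalEpsilon.
Set Implicit Arguments. Unset Strict Implicit. Unset Printing Implicit Defensive.
Import Order.TTheory GRing.Theory Num.Theory.
Import numFieldNormedType.Exports.
Local Open Scope classical_set_scope.
Local Open Scope ring_scope.

Section DistInt.
Variable R : realType.

Definition dist_int (u : R) : R :=
  Num.min (u - (Num.floor u)%:~R) ((Num.floor u + 1)%:~R - u).

Lemma dist_int_attained u : exists n : int, dist_int u = `|u - n%:~R|.
Proof.
have /andP[lo hi] := floor_itv u; rewrite /dist_int.
have [le|lt] := leP (u - (Num.floor u)%:~R) ((Num.floor u + 1)%:~R - u).
  by exists (Num.floor u); rewrite ger0_norm // subr_ge0.
by exists (Num.floor u + 1); rewrite ltr0_norm ?opprB // subr_lt0.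
Qed.

Lemma dist_int_le u (n : int) : dist_int u <= `|u - n%:~R|.
Proof.
have /andP[lo hi] := floor_itv u; rewrite /dist_int ge_min.
have [le|lt] := leP n (Num.floor u).
  apply/orP; left; apply: le_trans (ler_norm _).
  by rewrite lerB // ler_int.
apply/orP; right; rewrite -lezD1 in lt; rewrite distrC; apply: le_trans (ler_norm _).
by rewrite lerB // ler_int.
Qed.

Lemma dist_int_ge0 u : 0 <= dist_int u.
Proof. by have [n ->] := dist_int_attained u. Qed.

Lemma dist_int_lipschitz u w : dist_int u <= dist_int w + `|u - w|.
Proof.
have [n ->] := dist_int_attained w; apply: le_trans (dist_int_le u n) _.
have -> : u - n%:~R = (u - w) + (w - n%:~R) by rewrite addrA subrK.
by rewrite addrC; exact: ler_normD.
Qed.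

Lemma dist_int_sub u w : dist_int (u - w) <= dist_int u + dist_int w.
Proof.
have [n1 ->] := dist_int_attained u; have [n2 ->] := dist_int_attained w.
apply: le_trans (dist_int_le _ (n1 - n2)) _; rewrite intrB.
have -> : u - w - (n1%:~R - n2%:~R) = (u - n1%:~R) + - (w - n2%:~R) by ring.
by apply: le_trans (ler_normD _ _) _; rewrite normrN.
Qed.

Lemma dist_int_floor_neq u w :
  Num.floor u != Num.floor w -> dist_int u <= `|u - w|.
Proof.
move=> hne; have /andP[u1 u2] := floor_itv u; have /andP[w1 w2] := floor_itv w.
have [lt|ge] := ltP (Num.floor u) (Num.floor w).
  apply: le_trans (dist_int_le u (Num.floor u + 1)) _.
  rewrite -lezD1 -(ler_int R) in lt; rewrite !ler0_norm; lra.
have lt : Num.floor w < Num.floor u by rewrite lt_neqAle eq_sym hne.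
apply: le_trans (dist_int_le u (Num.floor u)) _.
rewrite -lezD1 -(ler_int R) in lt; move: w2; rewrite intrD => w2.
rewrite !ger0_norm; lra.
Qed.

Lemma floor_eq_dist_lt1 (u w : R) : Num.floor u = Num.floor w -> `|u - w| < 1.
Proof.
move=> e; have /andP[u1 u2] := floor_itv u; have /andP[w1 w2] := floor_itv w.
rewrite e intrD in u1 u2; rewrite intrD in w2.
by rewrite ltr_norml; apply/andP; split; lra.
Qed.

Lemma dist_int_shift_ge n (i j : 'I_n) :
  i != j -> (n%:R)^-1 <= dist_int ((j%:R - i%:R) / n%:R : R).
Proof.
move=> hij; have [k ->] := dist_int_attained ((j%:R - i%:R) / n%:R : R).
have n0 : (0 < n)%N by apply: leq_ltn_trans (ltn_ord i).
have n0R : 0 < n%:R :> R by rewrite ltr0n.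
pose z : int := j%:Z - i%:Z - k * n%:Z.
have z0 : z != 0.
  apply/eqP => e; have hi := ltn_ord i; have hj := ltn_ord j; rewrite /z in e.
  have : (k = 0 \/ 1 <= k \/ k <= -1)%R by lia.
  case=> [k0|[k1|k1]].
  - subst k; move/eqP: hij; apply; apply: val_inj => /=; lia.
  - have : (n%:Z <= k * n%:Z)%R by nia.
    lia.
  - have : (k * n%:Z <= - n%:Z)%R by nia.
    lia.
have -> : (j%:R - i%:R) / n%:R - k%:~R = z%:~R / n%:R :> R.
  by rewrite /z !intrB intrM !pmulrn; field; rewrite gt_eqF.
rewrite normrM (gtr0_norm (_ : 0 < (n%:R : R)^-1)) ?invr_gt0 //.
rewrite -[X in X <= _]mul1r; apply: ler_wpM2r; first by rewrite invr_ge0 ltW.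
rewrite -intr_norm ler1z; lia.
Qed.

End DistInt.

Lemma row_coord_le (R : realType) (m : nat) (u : 'rV[R]_m) i :
  `|u 0 i| <= `|u|.
Proof.
rewrite [X in _ <= X]mx_normrE.
exact: (le_bigmax _ (fun ij : 'I_1 * 'I_m => `|u ij.1 ij.2|) (ord0, i)).
Qed.

Lemma lipschitz_of_le (R : realType) (m : nat) (f : 'rV[R]_m -> R) (L : R) :
  (forall x y, f x <= f y + L * `|x - y|) ->
  forall x y, `|f x - f y| <= L * `|x - y|.
Proof.
move=> h x y; rewrite ler_norml; have := h x y; have := h y x.
rewrite (distrC y x); lra.
Qed.

Section NormEquivalence.
Variables (R : realType) (m : nat) (N : 'rV[R]_m -> R).
Hypothesis hN : is_norm N.

Lemma norm0 : N 0 = 0.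
Proof. by case: hN => _ _ hZ _; rewrite -(scale0r (0 : 'rV[R]_m)) hZ normr0 mul0r. Qed.

Lemma normN x : N (- x) = N x.
Proof. by case: hN => _ _ hZ _; rewrite -scaleN1r hZ normrN1 mul1r. Qed.

Lemma norm_dist x y : `|N x - N y| <= N (x - y).
Proof.
case: hN => _ _ _ hD.
have le z w : N z - N w <= N (z - w) by rewrite lerBlDr -{1}(subrK w z) hD.
by rewrite ler_norml le andbT lerNl opprB -[N (x - y)]normN opprB le.
Qed.

Lemma norm_sum (I : Type) (r : seq I) (F : I -> 'rV[R]_m) :
  N (\sum_(i <- r) F i) <= \sum_(i <- r) N (F i).
Proof.
case: hN => _ _ _ hD; elim: r => [|a r IH]; first by rewrite !big_nil norm0.
by rewrite !big_cons; apply: le_trans (hD _ _) _; rewrite lerD2l.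
Qed.

Lemma norm_le_mx_norm : exists2 C, 0 < C & forall u, N u <= C * `|u|.
Proof.
case: hN => hge0 _ hZ _.
have C0 : 0 <= \sum_(j < m) N (delta_mx 0 j) by apply: sumr_ge0.
exists (\sum_(j < m) N (delta_mx 0 j) + 1) => [|u]; first lra.
rewrite {1}(row_sum_delta u); apply: le_trans (norm_sum _ _) _.
rewrite mulrDl mulr_suml mul1r; apply: ler_wpDr => //.
apply: ler_sum => j _; rewrite hZ mulrC.
by apply: ler_wpM2l; [exact: hge0 | exact: row_coord_le].
Qed.

Lemma is_norm_continuous : continuous N.
Proof.
have [C C0 hC] := norm_le_mx_norm.
move=> x; apply/(@cvgrPdist_lt _ _ _ (nbhs x) (nbhs_filter x)) => e e0.
have eC0 : 0 < e / C by rewrite divr_gt0.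
near=> y.
have xy : `|x - y| < e / C.
  near: y; move: (e / C) eC0.
  by apply/(@cvgrPdist_lt _ _ _ (nbhs x) (nbhs_filter x) id); exact: cvg_id.
apply: le_lt_trans (norm_dist _ _) _; apply: le_lt_trans (hC _) _.
by rewrite mulrC -ltr_pdivlMr.
Unshelve. all: by end_near.
Qed.

(* The minimum of N on the unit sphere of the max-norm, which is compact. *)
Lemma mx_norm_le_norm : exists2 c, 0 < c & forall u, c * `|u| <= N u.
Proof.
case: hN => hge0 hN0 hZ _.
have [[w w0]|all0] := pselect (exists w : 'rV[R]_m, w != 0); last first.
  exists 1 => // u; have -> : u = 0.
    by apply/eqP; apply: contraT => u0; case: all0; exists u.
  by rewrite normr0 mulr0.
pose S := [set u : 'rV[R]_m | `|u| = 1].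
have S0 : S !=set0.
  exists (`|w|^-1 *: w).
  by rewrite /S /= mx_normZ normfV normr_id mulVf // normr_eq0.
have Sc : compact S.
  apply: bounded_closed_compact.
    rewrite /= /bounded_near; near=> M => u /= ->; near: M.
    exact: nbhs_pinfty_ge.
  apply: (@preimage_closed _ _ (fun u : 'rV[R]_m => `|u|) [set 1]).
    by move=> u _; exact: norm_continuous.
  exact: closed_eq.
have [c cS cmin] :=
  compact_EVT_min S0 Sc (continuous_subspaceT is_norm_continuous).
move: cS; rewrite inE /S /= => c1.
have c0 : c != 0.
  by apply/eqP => c0; move: c1; rewrite c0 normr0 => /eqP; rewrite eq_sym oner_eq0.
have Nc0 : 0 < N c.
  by rewrite lt_def hge0 andbT; apply/eqP => /hN0 /eqP; rewrite (negbTE c0).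
exists (N c) => // u.
have [->|u0] := eqVneq u 0; first by rewrite normr0 mulr0.
have un0 : 0 < `|u| by rewrite normr_gt0.
have := cmin (`|u|^-1 *: u).
rewrite inE /S /= mx_normZ normfV normr_id mulVf ?gt_eqF // => /(_ erefl).
by rewrite hZ normfV normr_id -ler_pdivlMr // mulrC.
Unshelve. all: by end_near.
Qed.

End NormEquivalence.

Section ShiftedGrids.
Variables (R : realType) (m : nat) (s : R).
Hypothesis s0 : 0 < s.

Definition margin : R := ((m.+1).*2%:R)^-1.

Lemma margin_gt0 : 0 < margin.
Proof. by rewrite invr_gt0 ltr0n double_gt0. Qed.

Lemma margin_inv_ge1 : 1 <= margin^-1.
Proof. rewrite invrK ler1n; lia. Qed.

Definition proximity (u : R) : R := Num.max 0 (margin - dist_int u).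

Lemma proximity_ge0 u : 0 <= proximity u.
Proof. by rewrite /proximity le_max lexx. Qed.

Lemma proximity_lipschitz u w : proximity u <= proximity w + `|u - w|.
Proof.
have := dist_int_lipschitz w u; have := normr_ge0 (u - w).
rewrite distrC /proximity !maxEle; case: ifP; case: ifP => ? ? ?; lra.
Qed.

Definition shifted_coord (j : nat) (x : 'rV[R]_m) (i : 'I_m) : R :=
  x 0 i / s - j%:R / (m.+1)%:R.

Lemma shifted_coord_dist j x y i :
  `|shifted_coord j x i - shifted_coord j y i| <= `|x - y| / s.
Proof.
have -> : shifted_coord j x i - shifted_coord j y i = (x - y) 0 i / s.
  by rewrite /shifted_coord !mxE; ring.
rewrite normrM (gtr0_norm (_ : 0 < s^-1)) ?invr_gt0 // ler_pM2r ?invr_gt0 //.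
exact: row_coord_le.
Qed.

Definition grid_defect (j : nat) (x : 'rV[R]_m) : R :=
  \big[Num.max/0]_(i < m) proximity (shifted_coord j x i).

Lemma grid_defect_ge0 j x : 0 <= grid_defect j x.
Proof.
rewrite /grid_defect; elim/big_ind: _ => // [a b ha hb|i _].
  by rewrite le_max ha.
exact: proximity_ge0.
Qed.

Lemma proximity_le_grid_defect j x i :
  proximity (shifted_coord j x i) <= grid_defect j x.
Proof. exact: (le_bigmax _ (fun i => proximity (shifted_coord j x i)) i). Qed.

Lemma grid_defect_eq0 j x :
  (forall i, margin <= dist_int (shifted_coord j x i)) -> grid_defect j x = 0.
Proof.
move=> h; rewrite /grid_defect; elim/big_ind: _ => // [a b -> ->|i _].
  by rewrite maxxx.
by rewrite /proximity max_l // subr_le0.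
Qed.

Lemma grid_defect_lipschitz j x y :
  grid_defect j x <= grid_defect j y + `|x - y| / s.
Proof.
apply: bigmax_le => [|i _].
  by apply: addr_ge0; [exact: grid_defect_ge0 | exact: divr_ge0 (ltW s0)].
apply: le_trans (proximity_lipschitz _ (shifted_coord j y i)) _.
by apply: lerD; [exact: proximity_le_grid_defect | exact: shifted_coord_dist].
Qed.

(* Pigeonhole: a coordinate close to Z for two shifts j != j' would give
   a difference (j' - j)/(m+1) at distance < 2 margin = 1/(m+1) from Z. *)
Lemma exists_good_grid x : exists j : 'I_m.+1, grid_defect j x = 0.
Proof.
apply: contrapT => hall.
have bad (j : 'I_m.+1) : exists i : 'I_m, dist_int (shifted_coord j x i) < margin.
  apply: contrapT => hne; apply: hall; exists j; apply: grid_defect_eq0 => i.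
  by rewrite leNgt; apply/negP => hlt; apply: hne; exists i.
have [f hf] := fin_all_exists bad.
suff /leq_card : injective f by rewrite !card_ord; lia.
move=> j j' e; apply/eqP; apply: contraT => hjj.
have := hf j; have := hf j'; rewrite -e => h2 h1.
have := dist_int_sub (shifted_coord j x (f j)) (shifted_coord j' x (f j)).
have -> : shifted_coord j x (f j) - shifted_coord j' x (f j) =
          (j'%:R - j%:R) / (m.+1)%:R by rewrite /shifted_coord; ring.
have := dist_int_shift_ge R hjj.
have -> : ((m.+1)%:R)^-1 = margin + margin :> R.
  rewrite /margin -mul2n natrM invfM; field.
  by apply/eqP => h; have := ler0n R m; lra.
lra.
Qed.

Definition lip_const : R := margin^-1 / s.

Lemma lip_const_gt0 : 0 < lip_const.
Proof. by rewrite divr_gt0 // invr_gt0 margin_gt0. Qed.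

Lemma grid_defect_lip_const j x y :
  grid_defect j x <= grid_defect j y + lip_const * `|x - y|.
Proof.
apply: le_trans (grid_defect_lipschitz j x y) _; rewrite lerD2l /lip_const mulrAC.
rewrite -{1}[`|x - y|]mul1r; apply: ler_wpM2r; first by rewrite invr_ge0 ltW.
by rewrite ler_wpM2r // margin_inv_ge1.
Qed.

Definition class_defect (r k : nat) (x : 'rV[R]_m) : R :=
  \big[Num.min/1]_(j < m.+1 | (j %% 2 ^ k.+1 == r)%N) grid_defect j x.

Lemma class_defect_lipschitz r k x y :
  class_defect r k x <= class_defect r k y + lip_const * `|x - y|.
Proof.
have e0 : 0 <= lip_const * `|x - y| by rewrite mulr_ge0 // ltW // lip_const_gt0.
rewrite -lerBlDr; apply: le_bigmin => [|j hj]; rewrite lerBlDr.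
  apply: le_trans (bigmin_le_id _ _ _ _) _; lra.
apply: le_trans (grid_defect_lip_const _ x y).
exact: (bigmin_le_cond _ (fun j : 'I_m.+1 => grid_defect j x) hj).
Qed.

Lemma class_defect_eq0P r k x :
  class_defect r k x = 0 <->
  exists2 j : 'I_m.+1, (j %% 2 ^ k.+1 = r)%N & grid_defect j x = 0.
Proof.
split=> [h0|[j /eqP hj hG]]; last first.
  apply/eqP; rewrite eq_le -hG.
  rewrite (bigmin_le_cond _ (fun j : 'I_m.+1 => grid_defect j x) hj) /=.
  by rewrite hG; apply: le_bigmin => // j' _; exact: grid_defect_ge0.
apply: contrapT => hne; move: h0; apply/eqP; rewrite gt_eqF //.
rewrite /class_defect; elim/big_ind: _ => // [a b ha hb|j /eqP hj].
  by rewrite lt_min ha hb.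
rewrite lt_def grid_defect_ge0 andbT; apply/eqP => hG.
by apply: hne; exists j.
Qed.

Definition cell (j : nat) (x : 'rV[R]_m) : {ffun 'I_m -> int} :=
  [ffun i => Num.floor (shifted_coord j x i)].

Definition cell_label (c : {ffun 'I_m -> int}) : R := ((pickle c).+1%:R)^-1.

Lemma cell_label_gt0 c : 0 < cell_label c.
Proof. by rewrite invr_gt0 ltr0n. Qed.

Lemma cell_label_le1 c : cell_label c <= 1.
Proof. by rewrite invf_le1 ?ltr0n // ler1n. Qed.

Lemma cell_label_inj : injective cell_label.
Proof.
move=> a b /invr_inj /eqP; rewrite eqr_nat eqSS => /eqP.
exact: (pcan_inj (@pickleK _)).
Qed.

(* Continuous because the label is cut off before x can leave its cell:
   crossing a cell boundary forces [grid_defect j x >= margin]. *)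
Definition cell_signal (j : nat) (x : 'rV[R]_m) : R :=
  Num.max 0 (cell_label (cell j x) - margin^-1 * grid_defect j x).

Lemma cell_signal_good j x :
  grid_defect j x = 0 -> cell_signal j x = cell_label (cell j x).
Proof.
by move=> h; rewrite /cell_signal h mulr0 subr0 max_r // ltW // cell_label_gt0.
Qed.

Lemma cell_signal_lipschitz j x y :
  cell_signal j x <= cell_signal j y + lip_const * `|x - y|.
Proof.
have hm0 : 0 <= margin^-1 by rewrite invr_ge0; exact: ltW margin_gt0.
have lipE : lip_const * `|x - y| = margin^-1 * (`|x - y| / s).
  by rewrite /lip_const; ring.
have e0 : 0 <= lip_const * `|x - y| by rewrite mulr_ge0 // ltW // lip_const_gt0.
have [same|diff] := eqVneq (cell j x) (cell j y).
  have h : margin^-1 * grid_defect j y <=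
           margin^-1 * grid_defect j x + lip_const * `|x - y|.
    rewrite lipE -mulrDr ler_wpM2l //.
    by rewrite distrC; exact: grid_defect_lipschitz.
  rewrite /cell_signal same !maxEle; case: ifP; case: ifP => ? ?; lra.
have [i hi] : exists i, Num.floor (shifted_coord j x i) !=
                        Num.floor (shifted_coord j y i).
  apply/existsP; apply: contraT => /existsPn h; case/eqP: diff.
  by apply/ffunP => i; rewrite !ffunE; have := h i; rewrite negbK => /eqP.
set d := dist_int (shifted_coord j x i).
have hd : d <= `|x - y| / s.
  exact: le_trans (dist_int_floor_neq hi) (shifted_coord_dist j x y i).
have hG : 1 - margin^-1 * d <= margin^-1 * grid_defect j x.
  rewrite -[X in X - _](mulVf (lt0r_neq0 margin_gt0)) -mulrBr ler_wpM2l //.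
  apply: le_trans (proximity_le_grid_defect j x i).
  by rewrite /proximity le_max lexx orbT.
have hd' : margin^-1 * d <= lip_const * `|x - y|.
  by rewrite lipE ler_wpM2l.
have := cell_label_le1 (cell j x); have := dist_int_ge0 (shifted_coord j x i).
have : 0 <= cell_signal j y by rewrite /cell_signal le_max lexx.
have : 0 <= margin^-1 * d by rewrite mulr_ge0 // dist_int_ge0.
rewrite /cell_signal !maxEle; case: ifP; case: ifP => ? ? ? ? ? ?; lra.
Qed.

End ShiftedGrids.

Section AdaptiveAlgorithms.
Variables (R : realType) (m : nat).

Lemma size_measurements (A : adaptive_alg R m) k x :
  size (measurements A k x) = k.
Proof. by elim: k => //= k IH; rewrite size_rcons IH. Qed.

Lemma measurements_lam (A B : adaptive_alg R m) k x :
  alg_lam A = alg_lam B -> measurements A k x = measurements B k x.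
Proof. by move=> eAB; elim: k => //= k ->; rewrite eAB. Qed.

Lemma exists_reconstruction (A : adaptive_alg R m) k
    (P : 'rV[R]_m -> 'rV[R]_m -> Prop) :
  (forall x y, measurements A k x = measurements A k y -> P x y) ->
  exists Phi, forall x, P x (run_alg (AdaptiveAlg (alg_lam A) Phi) k x).
Proof.
move=> fiberP.
pose Phi ys := epsilon (inhabits (0 : 'rV[R]_m)) (fun z => measurements A k z = ys).
exists Phi => x; rewrite /run_alg /= (@measurements_lam _ A) //.
apply: fiberP; symmetry.
by apply: (epsilon_spec _ (fun z => measurements A k z = _)); exists x.
Qed.

End AdaptiveAlgorithms.

Definition nonzero_bits (R : realType) (ys : seq R) : nat :=
  foldr (fun (y : R) (acc : nat) => ((y != 0%R) + 2 * acc)%N) 0%N ys.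

Lemma nonzero_bits_rcons (R : realType) (ys : seq R) y :
  nonzero_bits (rcons ys y) = (nonzero_bits ys + (y != 0%R) * 2 ^ size ys)%N.
Proof. by elim: ys => [|a ys IH] /=; [lia | rewrite IH expnS; lia]. Qed.

Lemma modn_pow2S j k :
  (j %% 2 ^ k.+1 = j %% 2 ^ k \/ j %% 2 ^ k.+1 = j %% 2 ^ k + 2 ^ k)%N.
Proof.
have e : (j %% 2 ^ k = (j %% 2 ^ k.+1) %% 2 ^ k)%N.
  by rewrite modn_dvdm // expnS dvdn_mull.
have hq : (j %% 2 ^ k.+1 < 2 ^ k.+1)%N by rewrite ltn_mod expn_gt0.
have hp : (0 < 2 ^ k)%N by rewrite expn_gt0.
move: hq e; rewrite expnS; set q := (j %% (2 * 2 ^ k))%N; set p := (2 ^ k)%N.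
move=> hq ->; have [lt|ge] := ltnP q p; first by left; rewrite modn_small.
by right; rewrite -{1 2}(subnK ge) modnDr modn_small ?subnK //; lia.
Qed.

Section BinarySearch.
Variables (R : realType) (m : nat) (s sc : R).
Hypotheses (s0 : 0 < s) (sc0 : 0 < sc).

Definition search_depth : nat := up_log 2 m.+1.

Definition search_lam (ys : seq R) (x : 'rV[R]_m) : R :=
  if (size ys < search_depth)%N
  then sc * class_defect s (nonzero_bits ys) (size ys) x
  else sc * cell_signal s (nonzero_bits ys) x.

Lemma search_lam_lipschitz ys x y :
  `|search_lam ys x - search_lam ys y| <= sc * lip_const m s * `|x - y|.
Proof.
have scale (f : 'rV[R]_m -> R) :
    (forall x y, f x <= f y + lip_const m s * `|x - y|) ->
    `|sc * f x - sc * f y| <= sc * lip_const m s * `|x - y|.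
  move=> hf; rewrite -mulrBr normrM (gtr0_norm sc0) -mulrA ler_pM2l //.
  exact: lipschitz_of_le.
rewrite /search_lam; case: ifP => _; apply: scale.
  exact: class_defect_lipschitz.
exact: cell_signal_lipschitz.
Qed.

Variable A : adaptive_alg R m.
Hypothesis hA : alg_lam A = search_lam.

Lemma search_invariant x k : (k <= search_depth)%N ->
  exists2 j : 'I_m.+1, (j %% 2 ^ k = nonzero_bits (measurements A k x))%N
                     & grid_defect s j x = 0.
Proof.
elim: k => [_|k IH hk] /=.
  by have [j hj] := exists_good_grid s0 x; exists j; rewrite ?expn0 ?modn1.
have [j hj hG] := IH (ltnW hk); set ys := measurements A k x in hj *.
have sz : size ys = k by exact: size_measurements.
rewrite nonzero_bits_rcons hA /search_lam sz hk mulf_eq0 (gt_eqF sc0).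
have [/class_defect_eq0P [j' hj' hG']|hne] /= :=
  eqVneq (class_defect s (nonzero_bits ys) k x) 0.
  by exists j'; rewrite // mul0n addn0.
exists j => //; rewrite mul1n.
have {}hne : (j %% 2 ^ k.+1 != nonzero_bits ys)%N.
  by apply: contra hne => /eqP hj'; apply/eqP/class_defect_eq0P; exists j.
by case: (modn_pow2S j k) hne => ->; rewrite hj // eqxx.
Qed.

Lemma search_finds_good_grid x :
  grid_defect s (nonzero_bits (measurements A search_depth x)) x = 0.
Proof.
have [j hj hG] := search_invariant x (leqnn _); rewrite -hj modn_small //.
exact: leq_trans (ltn_ord j) (up_logP _ _).
Qed.

Lemma same_measurements_close x x' :
  measurements A search_depth.+1 x = measurements A search_depth.+1 x' ->
  `|x - x'| <= s.
Proof.
rewrite /= => /rcons_inj [e1]; rewrite hA /search_lam !size_measurements ltnn.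
move=> /(mulfI (negbT (gt_eqF sc0))).
have hG := search_finds_good_grid x; have hG' := search_finds_good_grid x'.
rewrite e1 in hG *; rewrite (cell_signal_good hG) (cell_signal_good hG').
move=> /cell_label_inj ecell; set r := nonzero_bits _ in ecell.
rewrite [X in X <= _]mx_normrE; apply: bigmax_le => [|[a i] _ /=]; first exact: ltW.
rewrite (ord1 a) !mxE.
have := congr1 (fun c : {ffun 'I_m -> int} => c i) ecell.
rewrite /= !ffunE => /floor_eq_dist_lt1.
have -> : shifted_coord s r x i - shifted_coord s r x' i = (x 0 i - x' 0 i) / s.
  by rewrite /shifted_coord; ring.
rewrite normrM (gtr0_norm (_ : 0 < s^-1)) ?invr_gt0 // ltr_pdivrMr // mul1r.
exact: ltW.
Qed.

End BinarySearch.

Theorem theorem1 (R : realType) (m : nat) (N : 'rV[R]_m -> R)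
  (hN : is_norm N) (eps : R) (heps : 0 < eps) :
  exists (A : adaptive_alg R m) (k : nat),
    (k <= n_meas m)%N /\
    lipschitz1_measurements N A k /\
    (forall x : 'rV[R]_m, N (x - run_alg A k x) <= eps).
Proof.
have [c c0 hc] := mx_norm_le_norm hN.
have [C C0 hC] := norm_le_mx_norm hN.
pose s := eps / C.
have s0 : 0 < s by rewrite divr_gt0.
have L0 := lip_const_gt0 m s0.
pose sc := c / lip_const m s.
have sc0 : 0 < sc by rewrite divr_gt0.
pose A0 := @AdaptiveAlg R m (search_lam s sc) (fun _ => 0).
have fiber_small x y :
    measurements A0 (search_depth m).+1 x = measurements A0 (search_depth m).+1 y ->
    N (x - y) <= eps.
  move=> /(same_measurements_close s0 sc0 (erefl : alg_lam A0 = _)) hxy.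
  apply: le_trans (hC _) _; rewrite -(divfK (lt0r_neq0 C0) eps) -/s mulrC.
  by rewrite ler_pM2r.
have [Phi hPhi] := exists_reconstruction fiber_small.
exists (AdaptiveAlg (search_lam s sc) Phi), (search_depth m).+1.
split=> //; split=> [ys _ x y|]; last exact: hPhi.
apply: le_trans (search_lam_lipschitz s0 sc0 ys x y) (le_trans _ (hc (x - y))).
by rewrite /sc divfK ?lt0r_neq0.
Qed.
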